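(* Let $V\subseteq\mathcal V$ be finite and $\Theta,\Psi\subseteq\mathcal P(\mathcal H_V)$ arbitrary. Then (1) $\Theta\preceq_{dem}\Psi$ iff $(I-\Psi)\preceq_{ang}(I-\Theta)$; (2) $\Theta\le_S\Psi$ iff $(I-\Psi)\le_H(I-\Theta)$, where $I-\Theta=\{I-M:M\in\Theta\}$.
   Context: $\mathcal H_V$ is a finite-dimensional Hilbert space with identity $I$. $\mathcal D(\mathcal H_V)$: partial density operators; $\mathcal P(\mathcal H_V)$: effects (positive operators with eigenvalues in $[0,1]$); $\sqsubseteq$: Löwner order. $\mathrm{Exp}_{dem}(\rho\models\Theta)=\inf_{M\in\Theta}{\rm tr}(M\rho)$ (${\rm tr}(\rho)$ if $\Theta=\emptyset$); $\mathrm{Exp}_{ang}(\rho\models\Theta)=\sup_{M\in\Theta}{\rm tr}(M\rho)$ ($0$ if $\Theta=\emptyset$). $\Theta\preceq_{dem}\Psi$ iff $\mathrm{Exp}_{dem}(\rho\models\Theta)\le\mathrm{Exp}_{dem}(\rho\models\Psi)$ for all $\rho\in\mathcal D(\mathcal H_V)$; $\Theta\preceq_{ang}\Psi$ iff $\mathrm{Exp}_{ang}(\rho\models\Theta)\le\mathrm{Exp}_{ang}(\rho\models\Psi)$ for all $\rho\in\mathcal D(\mathcal H_V)$. $\Theta\le_H\Psi$ iff $\forall M\in\Theta\,\exists N\in\Psi:M\sqsubseteq N$; $\Theta\le_S\Psi$ iff $\forall N\in\Psi\,\exists M\in\Theta:M\sqsubseteq N$. *)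

(* H_V is modelled as C^n with C = R[i] (complex numbers over a realType R),
   operators on H_V as n x n complex matrices. *)
From HB Require Import structures.
From mathcomp Require Import all_boot all_order all_algebra.
From mathcomp Require Import complex.
From mathcomp Require Import all_classical all_reals.
Set Implicit Arguments. Unset Strict Implicit. Unset Printing Implicit Defensive.
Import Order.TTheory GRing.Theory Num.Theory.
Local Open Scope ring_scope.
Local Open Scope classical_set_scope.

Section QDefs.
Variables (R : realType) (n : nat).
Local Notation C := R[i].
Local Notation Mx := 'M[C]_n.

Definition adjmx (m p : nat) (A : 'M[C]_(m, p)) : 'M[C]_(p, m) :=
  (map_mx Num.conj A)^T.

Definition hermitian (A : Mx) : Prop := adjmx A = A.

Definition psd (A : Mx) : Prop :=
  hermitian A /\ forall v : 'rV[C]_n, 0 <= (v *m A *m adjmx v) 0 0.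

Definition loewner (A B : Mx) : Prop := psd (B - A).

Definition effect (M : Mx) : Prop :=
  psd M /\ forall a : C, eigenvalue M a -> 0 <= a <= 1.

Definition pdo (rho : Mx) : Prop := psd rho /\ \tr rho <= 1.

Definition trR (A : Mx) : R := complex.Re (\tr A).

Definition Exp_dem (rho : Mx) (Th : set Mx) : R :=
  if pselect (Th = set0) then trR rho
  else inf [set trR (M *m rho) | M in Th].

Definition Exp_ang (rho : Mx) (Th : set Mx) : R :=
  if pselect (Th = set0) then 0
  else sup [set trR (M *m rho) | M in Th].

Definition prec_dem (Th Ps : set Mx) : Prop :=
  forall rho, pdo rho -> Exp_dem rho Th <= Exp_dem rho Ps.

Definition prec_ang (Th Ps : set Mx) : Prop :=
  forall rho, pdo rho -> Exp_ang rho Th <= Exp_ang rho Ps.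

Definition le_H (Th Ps : set Mx) : Prop :=
  forall M, Th M -> exists N, Ps N /\ loewner M N.

Definition le_S (Th Ps : set Mx) : Prop :=
  forall N, Ps N -> exists M, Th M /\ loewner M N.

Definition complI (Th : set Mx) : set Mx := [set 1%:M - M | M in Th].

End QDefs.

(* For a positive operator rho, tr((I - M) rho) = tr rho - tr(M rho), so taking the
   supremum over I - Theta gives tr rho minus the infimum over Theta; this infimum is
   a genuine one because tr(M rho) >= 0 when M and rho are both positive, which follows
   from diagonalising rho by a unitary.  Comparing both sides, the demonic order on
   Theta, Psi becomes the reversed angelic order on I - Psi, I - Theta.  The Smyth and
   Hoare orders correspond for the simpler reason that (I - A) - (I - B) = B - A. *)
From HB Require Import structures.
From mathcomp Require Import all_boot all_order all_algebra.
From mathcomp Require Import complex.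
From mathcomp Require Import all_classical all_reals.
Set Implicit Arguments. Unset Strict Implicit. Unset Printing Implicit Defensive.
Import Order.TTheory GRing.Theory Num.Theory.
Local Open Scope ring_scope.
Local Open Scope classical_set_scope.
Local Open Scope sesquilinear_scope.

Lemma sup_subl_inf (R : realType) (c : R) (S : set R) :
  S !=set0 -> has_lbound S -> sup [set c - x | x in S] = c - inf S.
Proof.
move=> S0 lbS.
have supNS : has_sup (-%R @` S) by apply/has_inf_supN; split.
have sup_c : has_sup [set c] by split; [exists c | exists c => x ->].
rewrite /inf opprK -[in RHS](sup1 c) -sup_sumE //; congr sup.
apply/seteqP; split=> [_ [x Sx <-]|_ [_ -> [_ [x Sx <-] <-]]].
- by exists c => //; exists (- x) => //; exists x.
- by exists x.
Qed.

Lemma ReB (R : rcfType) (x y : R[i]) :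
  complex.Re (x - y) = complex.Re x - complex.Re y.
Proof. by case: x; case: y. Qed.

Lemma Re_ge0 (R : rcfType) (x : R[i]) : 0 <= x -> 0 <= complex.Re x.
Proof. by rewrite lecE => /andP[]. Qed.

Section PositiveOperators.
Variables (R : realType) (n : nat).
Local Notation C := R[i].

Lemma adjmxE m p (A : 'M[C]_(m, p)) : adjmx A = A ^t*.
Proof. by rewrite /adjmx map_trmx. Qed.

Lemma psd_normalmx (A : 'M[C]_n) : psd A -> A \is normalmx.
Proof. by move=> [hA _]; apply/normalmxP; rewrite -adjmxE hA. Qed.

Lemma psd_conj_diag_ge0 m (B : 'M[C]_(m, n)) i (A : 'M[C]_n) :
  psd A -> 0 <= (B *m A *m adjmx B) i i.
Proof.
move=> [_ A_ge0]; suff -> : (B *m A *m adjmx B) i i =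
    (row i B *m A *m adjmx (row i B)) 0 0 by exact: A_ge0.
rewrite !mxE; apply: eq_bigr => k _; rewrite !mxE; congr (_ * _).
by apply: eq_bigr => l _; rewrite !mxE.
Qed.

(* With rho = P^* D P for a unitary P, tr(M rho) = sum_i (P M P^* )_ii D_i,
   and D_i = (P rho P^* )_ii. *)
Lemma psd_mxtrace_mul_ge0 (M rho : 'M[C]_n) :
  psd M -> psd rho -> 0 <= \tr (M *m rho).
Proof.
move=> psdM psdrho.
have := orthomx_spectralP (psd_normalmx psdrho).
set P := spectralmx rho; set D := spectral_diag rho.
have P_unitary : P \is unitarymx by apply: spectral_unitarymx.
rewrite invmx_unitary // => rhoE.
have DE : diag_mx D = P *m rho *m adjmx P.
  by rewrite rhoE adjmxE !mulmxA (unitarymxP P_unitary) mul1mx mulmxtVK.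
rewrite rhoE !mulmxA mxtrace_mulC !mulmxA -adjmxE.
apply: sumr_ge0 => i _; rewrite mul_mx_diag mxE.
apply: mulr_ge0; first exact: psd_conj_diag_ge0.
by have := psd_conj_diag_ge0 P i psdrho; rewrite -DE mxE eqxx mulr1n.
Qed.

Lemma trR_psd_mul_ge0 (M rho : 'M[C]_n) :
  psd M -> psd rho -> 0 <= trR (M *m rho).
Proof. by move=> psdM psdrho; apply/Re_ge0/psd_mxtrace_mul_ge0. Qed.

Lemma trR_mul1Bl (M rho : 'M[C]_n) :
  trR ((1%:M - M) *m rho) = trR rho - trR (M *m rho).
Proof. by rewrite /trR mulmxBl mul1mx linearB ReB. Qed.

Lemma complI_eq0 (Th : set 'M[C]_n) : (complI Th = set0) = (Th = set0).
Proof.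
apply/propext; split; first exact: image_set0_set0.
by move->; rewrite /complI image_set0.
Qed.

Lemma Exp_ang_complI (rho : 'M[C]_n) (Th : set 'M[C]_n) :
  psd rho -> (forall M, Th M -> psd M) ->
  Exp_ang rho (complI Th) = trR rho - Exp_dem rho Th.
Proof.
move=> psdrho psdTh; rewrite /Exp_ang /Exp_dem complI_eq0.
case: (pselect (Th = set0)) => [_|Th0] /=; first by rewrite subrr.
have [M0 ThM0] : Th !=set0 by apply/set0P/eqP.
rewrite -sup_subl_inf; last first.
- by exists 0 => _ [M ThM <-]; exact: trR_psd_mul_ge0 (psdTh M ThM) psdrho.
- by exists (trR (M0 *m rho)), M0.
congr sup; apply/seteqP; split.
- move=> _ [_ [M ThM <-] <-]; rewrite trR_mul1Bl.
  by exists (trR (M *m rho)) => //; exists M.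
- by move=> _ [_ [M ThM <-] <-]; exists (1%:M - M); [exists M | rewrite trR_mul1Bl].
Qed.

Lemma loewner_compl (A B : 'M[C]_n) :
  loewner (1%:M - A) (1%:M - B) = loewner B A.
Proof. by rewrite /loewner opprB addrC addrA subrK. Qed.

Lemma prec_dem_complI (Th Ps : set 'M[C]_n) :
  (forall M, Th M -> psd M) -> (forall M, Ps M -> psd M) ->
  prec_dem Th Ps <-> prec_ang (complI Ps) (complI Th).
Proof.
move=> psdTh psdPs; split=> le_Exp rho pdo_rho; have := le_Exp rho pdo_rho;
  by rewrite !Exp_ang_complI ?lerD2l ?lerN2 //; case: pdo_rho.
Qed.

Lemma le_S_complI (Th Ps : set 'M[C]_n) :
  le_S Th Ps <-> le_H (complI Ps) (complI Th).
Proof.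
split=> [leS _ [N PsN <-] | leH N PsN].
- have [M [ThM leMN]] := leS N PsN.
  by exists (1%:M - M); split; [exists M | rewrite loewner_compl].
- have [_ [[M ThM <-] le1N1M]] := leH (1%:M - N) (ex_intro2 _ _ N PsN erefl).
  by exists M; split; last rewrite -loewner_compl.
Qed.

End PositiveOperators.

Theorem lemma3p3 (R : realType) (n : nat) (Th Ps : set 'M[R[i]]_n) :
  (forall M, Th M -> effect M) -> (forall M, Ps M -> effect M) ->
  (prec_dem Th Ps <-> prec_ang (complI Ps) (complI Th)) /\
  (le_S Th Ps <-> le_H (complI Ps) (complI Th)).
Proof.
move=> effTh effPs; split; last exact: le_S_complI.
by apply: prec_dem_complI => M; [case/effTh | case/effPs].
Qed.
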